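(* As $\alpha$ ranges over all edge weight systems $\alpha\in\mathcal W(\tau_\lambda;\mathbb Z)$, the elements $Z_\alpha=[Z_1^{\alpha_1}Z_2^{\alpha_2}\cdots Z_n^{\alpha_n}]$ form a basis of the complex vector space $\mathcal Z^\omega(\lambda)$.
   Context: $S$ is a closed oriented surface $\bar S$ of genus $g$ minus $s\ge1$ points $v_1,\dots,v_s$, with $2-2g-s<0$; $\lambda$ is an ideal triangulation (a triangulation of $\bar S$ with vertex set exactly $\{v_1,\dots,v_s\}$) with edges $\lambda_1,\dots,\lambda_n$, $n=6g+3s-6$. Let $a_{ij}\in\{0,1,2\}$ be the number of times an end of $\lambda_j$ immediately succeeds an end of $\lambda_i$ when going counterclockwise around a puncture, $\sigma_{ij}=a_{ij}-a_{ji}$. For $\omega\in\mathbb C-\{0\}$, $\mathcal T^\omega(\lambda)$ is the algebra with generators $Z_i^{\pm1}$ and relations $Z_iZ_j=\omega^{2\sigma_{ij}}Z_jZ_i$. Weyl ordering: $[Z_{i_1}^{n_1}\cdots Z_{i_l}^{n_l}]=\omega^{-\sum_{u<v}n_un_v\sigma_{i_ui_v}}Z_{i_1}^{n_1}\cdots Z_{i_l}^{n_l}$. A monomial $Z_1^{k_1}\cdots Z_n^{k_n}$ is balanced if for every face of $\lambda$ with sides $\lambda_{i_1},\lambda_{i_2},\lambda_{i_3}$ the sum $k_{i_1}+k_{i_2}+k_{i_3}$ is even; the balanced Chekhov–Fock algebra $\mathcal Z^\omega(\lambda)$ is the subalgebra of $\mathcal T^\omega(\lambda)$ generated by balanced monomials.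 Train track $\tau_\lambda$: in each face of $\lambda$, $\tau_\lambda$ consists of three arcs, each joining two sides of the face and turning around the corner between them; these arcs meet each edge $\lambda_i$ at a single switch, so that $\tau_\lambda$ has one switch per edge of $\lambda$ and three edges per face. $\mathcal W(\tau_\lambda;\mathbb Z)$ is the group of assignments of an integer to each edge of $\tau_\lambda$ such that at each switch the sum of the weights of edges incoming on one side equals the sum on the other side. For $\alpha\in\mathcal W(\tau_\lambda;\mathbb Z)$, $\alpha_i$ denotes the sum of the weights of the edges of $\tau_\lambda$ on one side of the switch on $\lambda_i$, and $Z_\alpha=[Z_1^{\alpha_1}\cdots Z_n^{\alpha_n}]$. *)

From HB Require Import structures.
From mathcomp Require Import all_boot all_order all_algebra.
From mathcomp Require Import finmap.
From mathcomp.multinomials Require Import monalg.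
From mathcomp Require Import Rstruct.
From mathcomp.real_closed Require Import complex.

Set Implicit Arguments.
Unset Strict Implicit.
Unset Printing Implicit Defensive.

Import GRing.Theory.
Local Open Scope ring_scope.

Definition CC := complex Rdefinitions.R.

(** An ideal triangulation [lambda] with [n] edges and [F] faces is encoded by
  [side : 'I_F -> 'I_3 -> 'I_n]: [side f k] is the edge of [lambda] forming the
  k-th side of face [f], the sides of each face being listed in
  counterclockwise order (for the orientation of the surface).  The surface
  [S] is obtained by gluing the faces along equally-labelled sides
  (orientation-reversingly) and deleting the vertices. *)

Section Triangulation.
Variables (n F : nat) (side : 'I_F -> 'I_3 -> 'I_n).

Definition two_sided : Prop :=
  forall i : 'I_n, #|[set p : 'I_F * 'I_3 | side p.1 p.2 == i]| = 2.

Definition face_adj : rel 'I_F :=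
  fun f g => [exists k, exists k', side f k == side g k'].

Definition tri_connected : Prop := forall f g : 'I_F, connect face_adj f g.

(** [a_ij]: number of corners where, going counterclockwise around the
  puncture, an end of [lambda_j] immediately succeeds an end of [lambda_i].
  In face [f], at the corner between sides [k] and [k+1], going
  counterclockwise around the vertex, side [k] succeeds side [k+1]. *)
Definition a_coef (i j : 'I_n) : nat :=
  #|[set p : 'I_F * 'I_3 | (side p.1 (ordS p.2) == i) && (side p.1 p.2 == j)]|.

Definition sigma (i j : 'I_n) : int := (a_coef i j)%:Z - (a_coef j i)%:Z.

Definition balanced (k : 'rV[int]_n) : Prop :=
  forall f : 'I_F,
    (2 %| k ord0 (side f (inord 0)) + k ord0 (side f (inord 1))
          + k ord0 (side f (inord 2)))%Z.

(** * The train track tau_lambda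
  Its edges are the corners of the faces: the edge [(f,k)] lies in face [f]
  and joins side [k] to side [k+1] (= [ordS k]).  The edges of tau_lambda
  arriving at the switch on side [k] of face [f] are the corner arcs
  [(f,k)] and [(f, k-1)]. *)
Definition side_weight (w : {ffun 'I_F * 'I_3 -> int}) (f : 'I_F) (k : 'I_3)
  : int := w (f, k) + w (f, ord_pred k).

Definition is_weight_system (w : {ffun 'I_F * 'I_3 -> int}) : Prop :=
  forall (f f' : 'I_F) (k k' : 'I_3),
    side f k = side f' k' -> side_weight w f k = side_weight w f' k'.

(** [alpha_i]: the total weight on one side of the switch on [lambda_i] *)
Definition edge_weight (w : {ffun 'I_F * 'I_3 -> int}) (i : 'I_n) : int :=
  oapp (fun p : 'I_F * 'I_3 => side_weight w p.1 p.2) 0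
       [pick p : 'I_F * 'I_3 | side p.1 p.2 == i].

Definition weight_vector (w : {ffun 'I_F * 'I_3 -> int}) : 'rV[int]_n :=
  \row_i edge_weight w i.

End Triangulation.

(** * The Chekhov-Fock algebra T^omega(lambda)
  Modelled as the quantum torus: the complex vector space with basis the
  symbols [e_k], k in Z^n, and the product
  [e_k * e_l = omega^(sum_(i,j) k_i l_j sigma_ij) e_(k+l)];
  the generator [Z_i] is [e_(delta_i)] and [Z_i^-1 = e_(-delta_i)]. *)

Section QuantumTorus.
Variables (n : nat) (sig : 'I_n -> 'I_n -> int) (omega : CC).

Definition QT := {malg CC['rV[int]_n]}.

Definition bform (k l : 'rV[int]_n) : int :=
  \sum_(i < n) \sum_(j < n) k ord0 i * l ord0 j * sig i j.

Definition emono (k : 'rV[int]_n) : QT := << k >>.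

Definition tmul (x y : QT) : QT :=
  \sum_(k <- msupp x) \sum_(l <- msupp y)
     << (x@_k * y@_l * omega ^ (bform k l)) *g (k + l) >>.

Definition tone : QT := emono 0.

Definition Zgen (i : 'I_n) : QT := emono (delta_mx 0 i).
Definition Zgen_inv (i : 'I_n) : QT := emono (- delta_mx 0 i).

Definition tpow (x : QT) (p : nat) : QT := iter p (tmul x) tone.

Definition Zpow (i : 'I_n) (m : int) : QT :=
  match m with
  | Posz p => tpow (Zgen i) p
  | Negz p => tpow (Zgen_inv i) p.+1
  end.

Definition monomial (k : 'rV[int]_n) : QT :=
  \big[tmul/tone]_(i < n) Zpow i (k ord0 i).

Definition weyl (k : 'rV[int]_n) : QT :=
  omega ^ (- \sum_(u < n) \sum_(v < n | (u < v)%N) k ord0 u * k ord0 v * sig u v)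
    *: monomial k.

Inductive gen_subalg (P : 'rV[int]_n -> Prop) : QT -> Prop :=
  | gen_mono k : P k -> gen_subalg P (monomial k)
  | gen_one : gen_subalg P tone
  | gen_add x y : gen_subalg P x -> gen_subalg P y -> gen_subalg P (x + y)
  | gen_scale (c : CC) x : gen_subalg P x -> gen_subalg P (c *: x)
  | gen_mul x y : gen_subalg P x -> gen_subalg P y -> gen_subalg P (tmul x y).

End QuantumTorus.

Definition balanced_CF (n F : nat) (side : 'I_F -> 'I_3 -> 'I_n) (omega : CC)
  : QT n -> Prop :=
  gen_subalg (sigma side) omega (balanced side).

Definition Z_alpha (n F : nat) (side : 'I_F -> 'I_3 -> 'I_n) (omega : CC)
  (w : {ffun 'I_F * 'I_3 -> int}) : QT n :=
  weyl (sigma side) omega (weight_vector side w).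

From HB Require Import structures.
From mathcomp Require Import all_boot all_order all_algebra.
From mathcomp Require Import finmap.
From mathcomp.multinomials Require Import monalg.
From mathcomp Require Import Rstruct.
From mathcomp.real_closed Require Import complex.
From Stdlib Require Import Classical.
From mathcomp Require Import ring.

(* Every monomial [Z_1^k_1 ... Z_n^k_n], Weyl-ordered or not, is a nonzero
   multiple of the basis vector e_k of the quantum torus, so the Weyl-ordered
   monomials of distinct exponents are linearly independent and the ones with
   balanced exponents span the subalgebra they generate.  It remains to match
   balanced exponents with edge weight systems: on a face with sides a, b, c
   the side weights of the corner weights x, y, z are x+z, y+x, z+y, whose sum
   is even; conversely a balanced triple is hit by x = (a+b-c)/2 etc., and this
   local inverse glues because the switch conditions say precisely that both
   faces at an edge agree on its weight. *)

Set Implicit Arguments.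
Unset Strict Implicit.
Unset Printing Implicit Defensive.

Import GRing.Theory.
Local Open Scope ring_scope.

Lemma scale_monalgU (K : choiceType) (G : nzRingType) (c : G) (k : K) :
  c *: (<< k >> : {malg G[K]}) = << c *g k >>.
Proof.
apply/malgP => m; rewrite mcoeffZ !mcoeffU.
by case: eqP => _; rewrite ?mulr1n ?mulr1 ?mulr0n ?mulr0.
Qed.

Section QuantumTorusMonomials.
Variables (n : nat) (sig : 'I_n -> 'I_n -> int) (omega : CC).
Hypothesis omega_neq0 : omega != 0.

Definition scaled_unit (x : QT n) (k : 'rV[int]_n) :=
  exists2 c : CC, c != 0 & x = << c *g k >>.

Lemma scaled_unitE x k : scaled_unit x k -> x@_k != 0 /\ x = << x@_k *g k >>.
Proof. by move=> [c c0 ->]; rewrite mcoeffUU. Qed.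

Lemma scaled_unit1 (k : 'rV[int]_n) : scaled_unit << k >> k.
Proof. by exists 1; rewrite ?oner_neq0. Qed.

Lemma scaled_unit_tmul x y k l : scaled_unit x k -> scaled_unit y l ->
  scaled_unit (tmul sig omega x y) (k + l).
Proof.
move=> [c c0 ->] [d d0 ->]; exists (c * d * omega ^ bform sig k l).
  by rewrite !mulf_neq0 // expfz_neq0.
by rewrite /tmul !msuppU (negbTE c0) (negbTE d0) !big_seq_fset1 !mcoeffUU.
Qed.

Lemma scaled_unit_tpow x k p : scaled_unit x k ->
  scaled_unit (tpow sig omega x p) (k *+ p).
Proof.
move=> xk; elim: p => [|p IHp]; first exact: scaled_unit1.
by rewrite mulrS; apply: scaled_unit_tmul.
Qed.

Lemma scaled_unit_Zpow i m : scaled_unit (Zpow sig omega i m) (m *: delta_mx 0 i).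
Proof.
case: m => p; rewrite /Zpow.
  by rewrite -[Posz p]natz scaler_nat; apply/scaled_unit_tpow/scaled_unit1.
rewrite NegzE scaleNr -[Posz _]natz scaler_nat -mulNrn.
exact/scaled_unit_tpow/scaled_unit1.
Qed.

Lemma scaled_unit_monomial k : scaled_unit (monomial sig omega k) k.
Proof.
suff: scaled_unit (monomial sig omega k) (\sum_i k ord0 i *: delta_mx 0 i).
  by rewrite -row_sum_delta.
apply: (big_ind2 scaled_unit); first exact: scaled_unit1.
  by move=> *; apply: scaled_unit_tmul.
by move=> i _; apply: scaled_unit_Zpow.
Qed.

Lemma weylE k : (weyl sig omega k)@_k != 0 /\
  weyl sig omega k = << (weyl sig omega k)@_k *g k >>.
Proof.
apply: scaled_unitE; rewrite /weyl; have [c c0 ->] := scaled_unit_monomial k.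
rewrite -scale_monalgU scalerA scale_monalgU; eexists; last reflexivity.
by rewrite mulf_neq0 // expfz_neq0.
Qed.

End QuantumTorusMonomials.

Section BalancedSupport.
Variables (n F : nat) (side : 'I_F -> 'I_3 -> 'I_n).

Lemma balanced0 : balanced side 0.
Proof. by move=> f; rewrite !mxE !add0r. Qed.

Lemma balancedD k l : balanced side k -> balanced side l -> balanced side (k + l).
Proof.
move=> bk bl f; rewrite !mxE.
set a0 := k _ _; set a1 := k _ _; set a2 := k _ _.
set b0 := l _ _; set b1 := l _ _; set b2 := l _ _.
have -> : a0 + b0 + (a1 + b1) + (a2 + b2) = a0 + a1 + a2 + (b0 + b1 + b2) by ring.
exact: rpredD (bk f) (bl f).
Qed.

Definition balanced_support (x : QT n) := forall m, ~ balanced side m -> x@_m = 0.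

Lemma balanced_msupp x m : balanced_support x -> m \in msupp x -> balanced side m.
Proof.
move=> bx; rewrite -mcoeff_neq0.
by case: (classic (balanced side m)) => // /bx ->; rewrite eqxx.
Qed.

Lemma balanced_CF_support (omega : CC) x : omega != 0 ->
  balanced_CF side omega x -> balanced_support x.
Proof.
move=> omega_neq0; elim=> {x} [k bk||x y _ bx _ by_|c x _ bx|x y _ bx _ by_] m bm.
- have [_ ->] := scaled_unitE (scaled_unit_monomial (sigma side) omega_neq0 k).
  by rewrite mcoeffU; case: eqP => [km|]; [rewrite km in bk|rewrite mulr0n].
- by rewrite mcoeffU; case: eqP => [m0|//]; case: bm; rewrite -m0; apply: balanced0.
- by rewrite mcoeffD bx // by_ // addr0.
- by rewrite mcoeffZ bx // mulr0.
rewrite /tmul raddf_sum big1 // => k _; rewrite raddf_sum big1 // => l _.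
rewrite /= mcoeffU; case: eqP => [klm|]; last by rewrite mulr0n.
case: (classic (balanced side k)) => [bk|/bx->]; last by rewrite !mul0r.
case: (classic (balanced side l)) => [bl|/by_->]; last by rewrite mulr0 mul0r.
by case: bm; rewrite -klm; apply: balancedD.
Qed.

End BalancedSupport.

Lemma ordS_inord0 : ordS (inord 0 : 'I_3) = inord 1.
Proof. by apply/val_inj; rewrite /= !inordK. Qed.
Lemma ordS_inord1 : ordS (inord 1 : 'I_3) = inord 2.
Proof. by apply/val_inj; rewrite /= !inordK. Qed.
Lemma ordS_inord2 : ordS (inord 2 : 'I_3) = inord 0.
Proof. by apply/val_inj; rewrite /= !inordK. Qed.
Lemma ord_pred_inord0 : ord_pred (inord 0 : 'I_3) = inord 2.
Proof. by apply/val_inj; rewrite /= !inordK. Qed.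
Lemma ord_pred_inord1 : ord_pred (inord 1 : 'I_3) = inord 0.
Proof. by apply/val_inj; rewrite /= !inordK. Qed.
Lemma ord_pred_inord2 : ord_pred (inord 2 : 'I_3) = inord 1.
Proof. by apply/val_inj; rewrite /= !inordK. Qed.

Definition ord3E := (ordS_inord0, ordS_inord1, ordS_inord2,
                     ord_pred_inord0, ord_pred_inord1, ord_pred_inord2).

Lemma ord3P (j : 'I_3) : [\/ j = inord 0, j = inord 1 | j = inord 2].
Proof.
by case: j => -[|[|[|//]]] ?; [apply: Or31|apply: Or32|apply: Or33];
   apply/val_inj; rewrite /= inordK.
Qed.

Section WeightSystems.
Variables (n F : nat) (side : 'I_F -> 'I_3 -> 'I_n).
Implicit Types (w : {ffun 'I_F * 'I_3 -> int}) (k : 'rV[int]_n).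

Lemma corner_weightE w f j :
  w (f, j) * 2 = side_weight w f j + side_weight w f (ordS j)
                 - side_weight w f (ordS (ordS j)).
Proof. by rewrite /side_weight; case: (ord3P j) => ->; rewrite !ord3E; ring. Qed.

Lemma edge_weight_side w f j : is_weight_system side w ->
  edge_weight side w (side f j) = side_weight w f j.
Proof.
move=> ws; rewrite /edge_weight; case: pickP => [[f' j'] /eqP /ws //|/(_ (f, j))].
by rewrite eqxx.
Qed.

Lemma weight_vector_balanced w : is_weight_system side w ->
  balanced side (weight_vector side w).
Proof.
move=> ws f; rewrite !mxE !edge_weight_side // /side_weight !ord3E.
set x := w _; set y := w _; set z := w _.
have -> : x + y + (z + x) + (y + z) = 2 * (x + y + z) by ring.
exact: dvdz_mulr.
Qed.

Lemma weight_vector_inj w w' : is_weight_system side w -> is_weight_system side w' ->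
  weight_vector side w = weight_vector side w' -> w = w'.
Proof.
move=> ws ws' /rowP ww'; apply/ffunP => -[f j]; apply: (@mulIf _ 2) => //.
have sw j' : side_weight w f j' = side_weight w' f j'.
  by rewrite -!edge_weight_side //; have := ww' (side f j'); rewrite !mxE.
by rewrite !corner_weightE !sw.
Qed.

(* The inverse of [corner_weightE]: division by 2 is exact on balanced vectors. *)
Definition weight_of_vector k : {ffun 'I_F * 'I_3 -> int} :=
  [ffun p => ((k ord0 (side p.1 p.2) + k ord0 (side p.1 (ordS p.2))
               - k ord0 (side p.1 (ordS (ordS p.2)))) %/ 2)%Z].

Lemma side_weight_of_vector k f j : balanced side k ->
  side_weight (weight_of_vector k) f j = k ord0 (side f j).
Proof.
move=> bk; apply: (@mulIf _ 2) => //; have := bk f.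
set a0 := k _ (side f _); set a1 := k _ (side f _); set a2 := k _ (side f _) => even.
have halfK a b c : (2 %| a + b + c)%Z -> ((a + b - c) %/ 2)%Z * 2 = a + b - c.
  move=> abc; apply: divzK; have -> : a + b - c = a + b + c - 2 * c by ring.
  by rewrite rpredB // dvdz_mulr.
have e1 : (2 %| a1 + a2 + a0)%Z by have -> : a1 + a2 + a0 = a0 + a1 + a2 by ring.
have e2 : (2 %| a2 + a0 + a1)%Z by have -> : a2 + a0 + a1 = a0 + a1 + a2 by ring.
rewrite /side_weight !ffunE /= mulrDl.
by case: (ord3P j) => ->; rewrite !ord3E -/a0 -/a1 -/a2 !halfK //; ring.
Qed.

Lemma weight_of_vector_system k : balanced side k ->
  is_weight_system side (weight_of_vector k).
Proof. by move=> bk f f' j j' ff'; rewrite !side_weight_of_vector // ff'. Qed.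

Lemma weight_of_vectorK k : two_sided side -> balanced side k ->
  weight_vector side (weight_of_vector k) = k.
Proof.
move=> two bk; apply/rowP => i; rewrite mxE.
have [[f j] /=] : exists p : 'I_F * 'I_3, p \in [set p | side p.1 p.2 == i].
  by apply/set0Pn; rewrite -card_gt0 two.
rewrite inE => /eqP <-; rewrite edge_weight_side; last exact: weight_of_vector_system.
by rewrite side_weight_of_vector // [0]ord1.
Qed.

End WeightSystems.

Section WeightSystemBasis.
Variables (n F : nat) (side : 'I_F -> 'I_3 -> 'I_n) (omega : CC).
Hypothesis omega_neq0 : omega != 0.
Implicit Types (w : {ffun 'I_F * 'I_3 -> int}).

Lemma Z_alpha_balanced_CF w : is_weight_system side w ->
  balanced_CF side omega (Z_alpha side omega w).
Proof. by move=> ws; apply/gen_scale/gen_mono/weight_vector_balanced. Qed.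

Lemma mcoeff_Z_alpha w w' : is_weight_system side w -> is_weight_system side w' ->
  (Z_alpha side omega w)@_(weight_vector side w') =
  (Z_alpha side omega w)@_(weight_vector side w) *+ (w == w').
Proof.
move=> ws ws'; rewrite /Z_alpha.
have [_ ->] := weylE (sigma side) omega_neq0 (weight_vector side w).
rewrite mcoeffU mcoeffUU; congr (_ *+ nat_of_bool _).
have [->|ww'] := eqVneq w w'; first by rewrite !eqxx.
by apply/negbTE; apply: contra_neq ww'; apply: weight_vector_inj.
Qed.

Lemma Z_alpha_free (s : seq {ffun 'I_F * 'I_3 -> int}) (c : _ -> CC) :
  uniq s -> (forall w, w \in s -> is_weight_system side w) ->
  \sum_(w <- s) c w *: Z_alpha side omega w = 0 ->
  forall w, w \in s -> c w = 0.
Proof.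
move=> s_uniq s_ws sum0 w0 w0s; have ws0 := s_ws w0 w0s.
have [d0 _] := weylE (sigma side) omega_neq0 (weight_vector side w0).
move: (congr1 (mcoeff (weight_vector side w0)) sum0); rewrite raddf_sum mcoeff0.
under eq_big_seq => w ws do
  rewrite /= mcoeffZ (mcoeff_Z_alpha (s_ws w ws) ws0) mulrnAr mulrb.
rewrite (bigD1_seq w0) //= eqxx big1 ?addr0 => [/eqP|w /negbTE -> //].
by rewrite mulf_eq0 (negbTE d0) orbF => /eqP.
Qed.

Lemma Z_alpha_span x : two_sided side -> balanced_CF side omega x ->
  exists (s : seq {ffun 'I_F * 'I_3 -> int}) (c : _ -> CC),
    (forall w, w \in s -> is_weight_system side w) /\
    x = \sum_(w <- s) c w *: Z_alpha side omega w.
Proof.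
move=> two /(balanced_CF_support omega_neq0) bx.
pose coef w := x@_(weight_vector side w) / (Z_alpha side omega w)@_(weight_vector side w).
exists [seq weight_of_vector side m | m <- msupp x], coef; split.
  by move=> _ /mapP [m mx ->]; apply/weight_of_vector_system/(balanced_msupp bx).
rewrite big_map {1}(monalgE x); apply: eq_big_seq => m mx.
have bm := balanced_msupp bx mx.
rewrite /coef /Z_alpha weight_of_vectorK //.
have [d0 ->] := weylE (sigma side) omega_neq0 m.
set d := (weyl _ _ m)@_m.
by rewrite mcoeffUU -(scale_monalgU d) scalerA divfK // scale_monalgU.
Qed.

End WeightSystemBasis.

Theorem lemma3p1 (n F : nat) (side : 'I_F -> 'I_3 -> 'I_n)
  (Htwo : two_sided side) (Hconn : tri_connected side) (Hn : (0 < n)%N)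
  (omega : CC) (Homega : omega != 0) :
  (* each Z_alpha lies in Z^omega(lambda) *)
  (forall w, is_weight_system side w -> balanced_CF side omega (Z_alpha side omega w))
  /\
  (* linear independence of the family (Z_alpha)_alpha *)
  (forall (s : seq {ffun 'I_F * 'I_3 -> int}) (c : {ffun 'I_F * 'I_3 -> int} -> CC),
     uniq s -> (forall w, w \in s -> is_weight_system side w) ->
     \sum_(w <- s) c w *: Z_alpha side omega w = 0 ->
     forall w, w \in s -> c w = 0)
  /\
  (* the family spans Z^omega(lambda) *)
  (forall x : QT n, balanced_CF side omega x ->
     exists (s : seq {ffun 'I_F * 'I_3 -> int}) (c : {ffun 'I_F * 'I_3 -> int} -> CC),
       (forall w, w \in s -> is_weight_system side w) /\
       x = \sum_(w <- s) c w *: Z_alpha side omega w).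
Proof.
split; first exact: Z_alpha_balanced_CF.
split; first exact: Z_alpha_free.
by move=> x; apply: Z_alpha_span.
Qed.
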